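(* Let $(n_m,k_m)_{m\ge1}$ be a sequence of pairs of integers with $k_m\ge 2$ and $n_m\ge k_m$, and let $P_m$ be the probability that a uniformly random composition of $n_m$ into $k_m$ positive parts has two equal parts (i.e. $x_i=x_j$ for some $i<j$). If $n_m/k_m^3\to\infty$ then $P_m\to 0$; if $n_m/k_m^3\to 0$ then $P_m\to 1$. Equivalently, writing $\mathcal D(n,k)$ for the number of compositions of $n$ into $k$ pairwise distinct positive parts and $\mathcal C(n,k)=\binom{n-1}{k-1}$, we have $\mathcal D(n,k)/\mathcal C(n,k)\to 1$ as $n/k^3\to\infty$ and $\mathcal D(n,k)/\mathcal C(n,k)\to 0$ as $n/k^3\to 0$.
   Context: A composition of a positive integer $n$ into $k$ positive parts is a sequence $(x_1,\dots,x_k)$ of positive integers with $x_1+\dots+x_k=n$; there are $\binom{n-1}{k-1}$ of them, and ''uniformly random'' means each is chosen with equal probability. *)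

From mathcomp Require Import all_boot.
From Stdlib Require Import Reals.

Set Implicit Arguments.
Unset Strict Implicit.
Unset Printing Implicit Defensive.

(* A composition of n into k positive parts: a function x : 'I_k -> {0..n}
   with all parts positive and sum n (parts are automatically <= n). *)
Definition compositions (n k : nat) : {set {ffun 'I_k -> 'I_n.+1}} :=
  [set x : {ffun 'I_k -> 'I_n.+1} | (\sum_(i < k) (x i : nat) == n) && [forall i, 0 < (x i : nat)]].

Definition comps_with_equal_parts (n k : nat) : {set {ffun 'I_k -> 'I_n.+1}} :=
  [set x in compositions n k | [exists i : 'I_k, exists j : 'I_k,
                                 (i < j) && (x i == x j)]].

Definition prob_equal_parts (n k : nat) : R :=
  Rdiv (INR #|comps_with_equal_parts n k|) (INR #|compositions n k|).

From Stdlib Require Import Lra.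
From mathcomp Require Import all_boot zify.

(* Write C(n, k) for the set of compositions of n into k positive parts,
   E(n, k) for those having two equal parts and D(n, k) for those whose parts
   are pairwise distinct, so that #E + #D = #C and P = #E / #C.

   - Counting: #C(n+1, k+1) = binomial(n, k), by lowering every part by one
     onto the weak compositions counted in the library.
   - Upper bound on #E: merging two equal parts x_i = x_j of an element of
     E(n, k+1) gives an element of C(n, k); recording the pair (i, j) makes this
     injective, so #E(n, K) (n - K + 1) <= K^3 #C(n, K), i.e. P <~ K^3 / n.
   - Upper bound on #D: removing the part equal to 1 (if any) and lowering the
     others by one gives #D(n, k+1) <= (k+1) #D(n-k-1, k) + #D(n-k-1, k+1);
     by convexity of binomials this solves to
     #D(n, k+1) <= binomial(n - beta(k+1), k) with beta(k) ~ k^2 / 4, and a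
     comparison of binomials yields #D(n, K) K^3 <= 16 n #C(n, K) for K >= 20,
     i.e. 1 - P <~ 16 n / K^3.
   The two limits of the theorem follow from these bounds in the reals. *)

Set Implicit Arguments.
Unset Strict Implicit.
Unset Printing Implicit Defensive.

Lemma card_le_inj_in (T T' : finType) (A : {set T}) (B : {set T'}) (f : T -> T') :
  {in A &, injective f} -> {in A, forall x, f x \in B} -> #|A| <= #|B|.
Proof.
move=> f_inj fAB; rewrite -(card_in_imset f_inj); apply: subset_leq_card.
by apply/subsetP => _ /imsetP [x xA ->]; apply: fAB.
Qed.

Lemma sum_term_le k (F : 'I_k -> nat) i : F i <= \sum_l F l.
Proof. by rewrite (bigD1 i) //= leq_addr. Qed.

Lemma sum_two_terms_le k (F : 'I_k -> nat) i j :
  i != j -> F i + F j <= \sum_l F l.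
Proof. by move=> ij; rewrite (bigD1 i) //= (bigD1 j) 1?eq_sym //= addnA leq_addr. Qed.

Section CompositionBasics.
Variables n k : nat.
Implicit Type x : {ffun 'I_k -> 'I_n.+1}.

Lemma compositionsP x :
  reflect (\sum_i (x i : nat) = n /\ forall i, 0 < (x i : nat))
          (x \in compositions n k).
Proof.
rewrite inE; apply: (iffP andP) => [[/eqP s /forallP p] | [s p]] //.
by rewrite s eqxx; split=> //; apply/forallP.
Qed.

Lemma comp_sum {x} : x \in compositions n k -> \sum_i (x i : nat) = n.
Proof. by case/compositionsP. Qed.

Lemma comp_part_gt0 {x} i : x \in compositions n k -> 0 < (x i : nat).
Proof. by case/compositionsP=> _; apply. Qed.

Lemma comp_two_parts_le {x i j} :
  x \in compositions n k -> i != j -> (x i : nat) + x j <= n.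
Proof.
move=> xC ij; rewrite -[leqRHS](comp_sum xC).
exact: (sum_two_terms_le (fun l => (x l : nat))).
Qed.

Lemma comp_length_le {x} : x \in compositions n k -> k <= n.
Proof.
move=> xC; rewrite -[leqRHS](comp_sum xC) -[k in k <= _]card_ord -sum1_card.
by apply: leq_sum => i _; apply: comp_part_gt0.
Qed.

End CompositionBasics.

Lemma comp_part_le n k {x : {ffun 'I_k.+1 -> 'I_n.+1}} i :
  x \in compositions n k.+1 -> (x i : nat) + k <= n.
Proof.
move=> xC; rewrite -[leqRHS](comp_sum xC) (bigD1_ord i) //= leq_add2l.
rewrite -[k in k <= _]card_ord -sum1_card.
by apply: leq_sum => l _; apply: comp_part_gt0.
Qed.

Lemma card_compositions0 k : #|compositions 0 k.+1| = 0.
Proof.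
apply: eq_card0 => x; apply/negbTE/negP => xC.
by have := comp_part_gt0 ord0 xC; case: (x ord0) => -[].
Qed.

(* Subtracting 1 from every part identifies compositions of n+1 into k+1
   parts with weak compositions of n-k into k+1 parts, which are counted by
   the library lemma card_ord_partitions. *)
Lemma card_compositions n k : #|compositions n.+1 k.+1| = 'C(n, k).
Proof.
have [lt_nk | le_kn] := ltnP n k.
  rewrite bin_small //; apply: eq_card0 => x; apply/negbTE/negP => xC.
  by have := comp_part_le ord0 xC; have := comp_part_gt0 ord0 xC; lia.
have -> : 'C(n, k) = 'C(k + (n - k), k) by rewrite subnKC.
rewrite -card_ord_partitions; apply/eqP; rewrite eqn_leq; apply/andP; split.
- pose lower (x : {ffun 'I_k.+1 -> 'I_n.+2}) :=
    [tuple (inord (x i - 1) : 'I_(n - k).+1) | i < k.+1].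
  have bnd x i : x \in compositions n.+1 k.+1 -> (x i : nat) - 1 < (n - k).+1.
    by move=> xC; have := comp_part_le i xC; set a := nat_of_ord _; lia.
  apply: (@card_le_inj_in _ _ _ _ lower).
  + move=> x y xC yC /(congr1 (fun t => tnth t)) E; apply/ffunP => i.
    apply: ord_inj; have /(congr1 val) := congr1 (fun f => f i) E.
    rewrite /= !tnth_mktuple !inordK ?bnd //.
    by have := comp_part_gt0 i xC; have := comp_part_gt0 i yC; lia.
  + move=> x xC; rewrite inE big_tuple.
    under eq_bigr do rewrite tnth_mktuple inordK ?bnd //.
    rewrite sumnB; last by move=> i _; apply: comp_part_gt0.
    by rewrite (comp_sum xC) sum_nat_const card_ord muln1; apply/eqP; lia.
- pose raise (t : k.+1.-tuple 'I_(n - k).+1) :=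
    [ffun i => inord (tnth t i + 1) : 'I_n.+2].
  have bnd (t : k.+1.-tuple 'I_(n - k).+1) i : (tnth t i : nat) + 1 < n.+2.
    by have := ltn_ord (tnth t i); lia.
  apply: (@card_le_inj_in _ _ _ _ raise).
  + move=> t u _ _ /ffunP E; apply: eq_from_tnth => i; apply: ord_inj.
    by have /(congr1 val) := E i; rewrite !ffunE /= !inordK ?bnd //; lia.
  + move=> t; rewrite inE big_tuple => /eqP tS; apply/compositionsP.
    split=> [|i]; last by rewrite ffunE inordK ?bnd // addn1.
    under eq_bigr do rewrite ffunE inordK ?bnd //.
    by rewrite big_split /= tS sum_nat_const card_ord muln1; lia.
Qed.

Lemma card_compositions_gt0 n K : 0 < K -> K <= n -> 0 < #|compositions n K|.
Proof. by case: K n => [|k] [|n] //; rewrite card_compositions bin_gt0. Qed.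

Lemma card_compositions_ratio n k : 0 < k ->
  #|compositions n k| * (n - k) = k * #|compositions n k.+1|.
Proof.
case: n => [|n] k_gt0; first by rewrite card_compositions0 sub0n !muln0.
case: k k_gt0 => // k _.
by rewrite !card_compositions subSS mulnC mul_bin_left.
Qed.

Definition merge_parts n k (i j : 'I_k.+1) (x : {ffun 'I_k.+1 -> 'I_n.+1}) :
    {ffun 'I_k -> 'I_n.+1} :=
  [ffun l => inord (x (lift j l) + (if lift j l == i then (x j : nat) else 0))].

Section MergeParts.
Variables (n k : nat) (i j : 'I_k.+1).
Hypothesis neq_ij : i != j.

Lemma merge_partsE x l : x \in compositions n k.+1 ->
  (merge_parts i j x l : nat) = x (lift j l) + (if lift j l == i then (x j : nat) else 0).
Proof.
move=> xC; rewrite ffunE inordK // ltnS.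
case: eqP => [->|_]; first exact: comp_two_parts_le.
by rewrite addn0 -ltnS.
Qed.

Lemma merge_parts_comp x :
  x \in compositions n k.+1 -> merge_parts i j x \in compositions n k.
Proof.
move=> xC; have [l0 ei|ei] := unliftP j i; last by move: neq_ij; rewrite ei eqxx.
apply/compositionsP; split=> [|l]; last first.
  by rewrite merge_partsE // ltn_addr // comp_part_gt0.
under eq_bigr do rewrite merge_partsE //.
rewrite big_split /= -big_mkcond ei.
rewrite [X in _ + X](big_pred1 l0) => [|l]; last by apply/eqP/eqP => [/lift_inj|->].
by rewrite -[RHS](comp_sum xC) (bigD1_ord j) //= addnC.
Qed.

Lemma merge_parts_inj x y :
  x \in compositions n k.+1 -> y \in compositions n k.+1 ->
  x i = x j -> y i = y j -> merge_parts i j x = merge_parts i j y -> x = y.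
Proof.
move=> xC yC xij yij /ffunP E.
have {}E l : (x (lift j l) : nat) + (if lift j l == i then (x j : nat) else 0) =
             y (lift j l) + (if lift j l == i then (y j : nat) else 0).
  by rewrite -!merge_partsE // E.
have [l0 ei|ei] := unliftP j i; last by move: neq_ij; rewrite ei eqxx.
have xyj : x j = y j.
  by apply: ord_inj; have := E l0; rewrite -ei eqxx xij yij; lia.
apply/ffunP => t; have [l ->|->] // := unliftP j t.
have [e|ne] := eqVneq (lift j l) i; first by rewrite e xij yij.
by apply: ord_inj; have := E l; rewrite (negbTE ne) !addn0.
Qed.

End MergeParts.

(* Recording a pair of equal parts and merging them is an injection, so at
   most (k+1)^2 #C(n, k) compositions into k+1 parts have two equal parts. *)
Lemma card_equal_parts_le n k :
  #|comps_with_equal_parts n k.+1| <= k.+1 * k.+1 * #|compositions n k|.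
Proof.
pose pair_of (x : {ffun 'I_k.+1 -> 'I_n.+1}) := odflt (ord0, ord0)
  [pick p : 'I_k.+1 * 'I_k.+1 | (p.1 < p.2) && (x p.1 == x p.2)].
have pairP x : x \in comps_with_equal_parts n k.+1 ->
  [/\ x \in compositions n k.+1, (pair_of x).1 != (pair_of x).2
    & x (pair_of x).1 = x (pair_of x).2].
  rewrite inE => /andP [xC /existsP [i /existsP [j /andP [ij eij]]]].
  rewrite /pair_of; case: pickP => [p /andP [lt_p /eqP ep]|/(_ (i, j))].
    by rewrite neq_ltn lt_p.
  by rewrite /= ij eij.
apply: (@leq_trans #|setX [set: 'I_k.+1 * 'I_k.+1] (compositions n k)|); last first.
  by rewrite cardsX cardsT card_prod !card_ord.
apply: (@card_le_inj_in _ _ _ _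
   (fun x => (pair_of x, merge_parts (pair_of x).1 (pair_of x).2 x))).
- move=> x y /pairP [xC ne ex] /pairP [yC _ ey] [E1 E2].
  by rewrite -E1 in ey E2; apply: (merge_parts_inj ne xC yC ex ey E2).
- by move=> x /pairP [xC ne _]; rewrite inE /= in_setT merge_parts_comp.
Qed.

Lemma card_equal_parts_bound n K : 1 < K ->
  #|comps_with_equal_parts n K| * (n - K.-1) <= K ^ 3 * #|compositions n K|.
Proof.
case: K => [|k] //= k_gt0.
apply: (@leq_trans (k.+1 * k.+1 * #|compositions n k| * (n - k))).
  by rewrite leq_mul2r card_equal_parts_le orbT.
rewrite -mulnA card_compositions_ratio // mulnA leq_mul2r.
by apply/orP; right; rewrite !expnS expn0 muln1 mulnA leq_mul2l leqnSn orbT.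
Qed.

Definition distinct_compositions n k : {set {ffun 'I_k -> 'I_n.+1}} :=
  [set x in compositions n k | injectiveb x].

Lemma distinct_compositionsP n k (x : {ffun 'I_k -> 'I_n.+1}) :
  reflect (x \in compositions n k /\ injective x) (x \in distinct_compositions n k).
Proof.
by apply: (iffP setIdP) => -[xC /injectiveP].
Qed.

Lemma distinct_sub_compositions n k :
  distinct_compositions n k \subset compositions n k.
Proof. by apply/subsetP => x /setIdP []. Qed.

Lemma exists_equal_pair k (T : eqType) (x : 'I_k -> T) :
  [exists i : 'I_k, exists j : 'I_k, (i < j) && (x i == x j)] = ~~ injectiveb x.
Proof.
apply/idP/idP => [/existsP [i /existsP [j /andP [ij /eqP eij]]]|].
  by apply/negP => /injectiveP x_inj; move: ij; rewrite (x_inj _ _ eij) ltnn.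
apply: contraR => /existsPn no_pair; apply/injectiveP => i j eij.
have [ij|ji|/ord_inj //] := ltngtP i j.
  by have /existsPn/(_ j) := no_pair i; rewrite ij eij eqxx.
by have /existsPn/(_ i) := no_pair j; rewrite ji eij eqxx.
Qed.

Lemma card_equal_parts_distinct n k :
  #|comps_with_equal_parts n k| + #|distinct_compositions n k| = #|compositions n k|.
Proof.
have -> : comps_with_equal_parts n k = compositions n k :\: distinct_compositions n k.
  apply/setP => x; rewrite in_setD [x \in distinct_compositions _ _]inE.
  rewrite [x \in comps_with_equal_parts _ _]inE exists_equal_pair.
  by case: (x \in compositions n k); rewrite ?andbT.
rewrite -(cardsID (distinct_compositions n k) (compositions n k)) addnC.
by rewrite (setIidPr (distinct_sub_compositions n k)).
Qed.

(* The codomain 'I_N.+1 of x is arbitrary, since lowering is also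
   applied to compositions with a part removed. *)
Definition lower_parts m N k (x : {ffun 'I_k -> 'I_N.+1}) : {ffun 'I_k -> 'I_m.+1} :=
  [ffun i => inord (x i).-1].

Definition comp_parts_gt1 m N k (x : {ffun 'I_k -> 'I_N.+1}) :=
  \sum_i (x i : nat) = m + k /\ forall i, 1 < x i.

Lemma lower_partsE m N k (x : {ffun 'I_k -> 'I_N.+1}) i :
  comp_parts_gt1 m x -> (lower_parts m x i : nat) = (x i).-1.
Proof.
move=> [x_sum x_gt1]; rewrite ffunE inordK // ltnS -subn1.
apply: leq_trans (sum_term_le (fun l => (x l : nat) - 1) i) _.
rewrite sumnB => [|l _]; last exact: ltnW.
by rewrite x_sum sum_nat_const card_ord muln1 addnK.
Qed.

Lemma lower_parts_inj m N k (x y : {ffun 'I_k -> 'I_N.+1}) :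
  comp_parts_gt1 m x -> comp_parts_gt1 m y -> lower_parts m x = lower_parts m y -> x = y.
Proof.
move=> hx hy /ffunP E; apply/ffunP => i; apply: ord_inj.
have := E i; move/(congr1 (@nat_of_ord _)); rewrite !lower_partsE //.
by move=> e; rewrite -(prednK (ltnW (hx.2 i))) -(prednK (ltnW (hy.2 i))) e.
Qed.

Lemma lower_parts_distinct m N k (x : {ffun 'I_k -> 'I_N.+1}) :
  comp_parts_gt1 m x -> injective x -> lower_parts m x \in distinct_compositions m k.
Proof.
move=> hx x_inj; apply/distinct_compositionsP; split.
  apply/compositionsP; split=> [|i]; last by rewrite lower_partsE // -subn1 subn_gt0 hx.2.
  under eq_bigr do rewrite lower_partsE // -subn1.
  rewrite sumnB => [|i _]; last by rewrite ltnW ?hx.2.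
  by rewrite hx.1 sum_nat_const card_ord muln1 addnK.
move => i j /(congr1 (@nat_of_ord _)); rewrite !lower_partsE // => eij.
by apply: x_inj; apply: ord_inj; have := hx.2 i; have := hx.2 j; lia.
Qed.

Definition all_parts_gt1 n k : {set {ffun 'I_k -> 'I_n.+1}} :=
  [set x : {ffun 'I_k -> 'I_n.+1} | [forall i, 1 < x i]].

Lemma card_distinct_parts_gt1 n k :
  #|distinct_compositions n k :&: all_parts_gt1 n k|
    <= #|distinct_compositions (n - k) k|.
Proof.
have gt1 x : x \in distinct_compositions n k :&: all_parts_gt1 n k ->
    injective x /\ comp_parts_gt1 (n - k) x.
  rewrite in_setI [x \in all_parts_gt1 _ _]inE.
  move=> /andP [/distinct_compositionsP [xC x_inj] /forallP x_gt1].
  by split=> //; split=> //; rewrite subnK ?(comp_sum xC) ?(comp_length_le xC).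
apply: (@card_le_inj_in _ _ _ _ (@lower_parts (n - k) n k)).
  by move=> x y /gt1 [_ hx] /gt1 [_ hy]; apply: lower_parts_inj.
by move=> x /gt1 [x_inj hx]; apply: lower_parts_distinct.
Qed.

(* A distinct composition with a part equal to 1 is determined by the
   position p of that part and by the lowering of the remaining parts. *)
Definition drop_part n k (p : 'I_k.+1) (x : {ffun 'I_k.+1 -> 'I_n.+1}) :
    {ffun 'I_k -> 'I_n.+1} :=
  [ffun l => x (lift p l)].

Definition pos_part1 n k (x : {ffun 'I_k.+1 -> 'I_n.+1}) : 'I_k.+1 :=
  odflt ord0 [pick i | x i == 1 :> nat].

Lemma distinct_part1P n k (x : {ffun 'I_k.+1 -> 'I_n.+1}) :
  x \in distinct_compositions n k.+1 :\: all_parts_gt1 n k.+1 ->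
  [/\ (x (pos_part1 x) : nat) = 1, injective x
     & comp_parts_gt1 (n - k.+1) (drop_part (pos_part1 x) x)].
Proof.
rewrite in_setD [x \in all_parts_gt1 _ _]inE.
move=> /andP [/forallPn [i0 x_i0] /distinct_compositionsP [xC x_inj]].
have x1 : (x (pos_part1 x) : nat) = 1.
  rewrite /pos_part1; case: pickP => [i /eqP //|/(_ i0) /negbT].
  by have := comp_part_gt0 i0 xC; move: x_i0; case: (x i0 : nat) => [|[]].
split=> //; split=> [|l]; last first.
  rewrite ffunE ltn_neqAle eq_sym -x1 (inj_eq val_inj) (inj_eq x_inj).
  by rewrite [lift _ _ == _]eq_sym neq_lift x1 comp_part_gt0.
under eq_bigr do rewrite ffunE.
have := comp_sum xC; rewrite (bigD1_ord (pos_part1 x)) //= x1.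
by have := comp_length_le xC; lia.
Qed.

Lemma card_distinct_part1 n k :
  #|distinct_compositions n k.+1 :\: all_parts_gt1 n k.+1|
    <= k.+1 * #|distinct_compositions (n - k.+1) k|.
Proof.
pose D := distinct_compositions (n - k.+1) k.
apply: (@leq_trans #|setX [set: 'I_k.+1] D|); last by rewrite cardsX cardsT card_ord.
apply: (@card_le_inj_in _ _ _ _
   (fun x => (pos_part1 x, lower_parts (n - k.+1) (drop_part (pos_part1 x) x)))).
- move=> x y /distinct_part1P [x1 _ hx] /distinct_part1P [y1 _ hy] [ep E].
  rewrite -ep in y1 hy E; have {}E := lower_parts_inj hx hy E.
  apply/ffunP => t; have [l ->|->] := unliftP (pos_part1 x) t.
    by move/ffunP: E => /(_ l); rewrite !ffunE.
  by apply: ord_inj; rewrite x1 y1.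
- move=> x /distinct_part1P [_ x_inj hx]; rewrite inE /= in_setT lower_parts_distinct //.
  by move=> l l' /[!ffunE] /x_inj /lift_inj.
Qed.

Lemma card_distinct_rec n k :
  #|distinct_compositions n k.+1|
    <= k.+1 * #|distinct_compositions (n - k.+1) k|
       + #|distinct_compositions (n - k.+1) k.+1|.
Proof.
rewrite -(cardsID (all_parts_gt1 n k.+1)) addnC.
by apply: leq_add; [apply: card_distinct_part1 | apply: card_distinct_parts_gt1].
Qed.

Lemma bin_add_sum x L r : 'C(x + L, r.+1) = 'C(x, r.+1) + \sum_(t < L) 'C(x + t, r).
Proof.
elim: L => [|L IH]; first by rewrite addn0 big_ord0 addn0.
by rewrite addnS binS IH big_ord_recr /= addnA.
Qed.

Lemma bin_convex_sym m s r : s <= m -> 2 * 'C(m, r) <= 'C(m - s, r) + 'C(m + s, r).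
Proof.
elim: s => [|s IH] sm; first by rewrite subn0 addn0 mul2n addnn.
apply: leq_trans (IH (ltnW sm)) _; case: r {IH} => [|r]; first by rewrite !bin0.
have -> : m - s = (m - s.+1).+1 by lia.
rewrite addnS !binS -addnA leq_add2l addnC leq_add2l.
by apply: leq_bin2l; lia.
Qed.

Lemma bin_convex u v m r : 2 * m <= u + v -> 2 * 'C(m, r) <= 'C(u, r) + 'C(v, r).
Proof.
wlog uv : u v / u <= v.
  move=> H huv; have [/H -> //|/ltnW vu] := leqP u v.
  by rewrite addnC H // addnC.
move=> huv; have [mu|um] := leqP m u.
  by rewrite mul2n -addnn leq_add ?leq_bin2l // (leq_trans mu).
have := @bin_convex_sym m (m - u) r (leq_subr u m); rewrite subKn ?(ltnW um) // => H.
by apply: leq_trans H _; rewrite leq_add2l leq_bin2l //; lia.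
Qed.

Lemma bin_sum_ge x L m r : 2 * m <= 2 * x + L - 1 ->
  L * 'C(m, r) <= \sum_(t < L) 'C(x + t, r).
Proof.
move=> hm; rewrite -(leq_pmul2l (isT : 0 < 2)).
have -> : 2 * \sum_(t < L) 'C(x + t, r) =
    \sum_(t < L) ('C(x + t, r) + 'C(x + (L - t.+1), r)).
  rewrite big_split /= mul2n -addnn; congr (_ + _).
  by rewrite (reindex_inj rev_ord_inj).
rewrite mulnA [2 * L]mulnC -mulnA -[L in L * _]card_ord -sum_nat_const.
by apply: leq_sum => t _; apply: bin_convex; have := ltn_ord t; lia.
Qed.

(* The inequality driving the induction in card_distinct_le: with
   a = n - r - 2 - b, (r+2) binomial(a, r) + binomial(a - d, r + 1) is at most
   binomial(a - d + r + 2, r + 1) as long as 2 d <= r + 1. *)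
Lemma bin_rec_ineq n r b d : 2 * d <= r.+1 -> r.+2 <= n -> (r = 0 -> b = 0) ->
  r.+2 * 'C(n - r.+2 - b, r) + 'C(n - r.+2 - (b + d), r.+1) <= 'C(n - (b + d), r.+1).
Proof.
move=> hd hn hb; have hb' : 0 < r \/ b = 0.
  by case: r hb {hd hn} => [|r] hb; [right; apply: hb | left].
have [small|big] := ltnP (n - r.+2 - b) r.
  by rewrite bin_small // muln0 add0n leq_bin2l //; lia.
have -> : n - r.+2 - (b + d) = (n - r.+2 - b) - d by lia.
have -> : n - (b + d) = ((n - r.+2 - b) - d) + r.+2 by lia.
by rewrite bin_add_sum addnC leq_add2l bin_sum_ge //; lia.
Qed.

(* beta k = sum_(j < k) floor(j / 2) grows like k^2 / 4; it measures how much
   larger than an arbitrary one a composition into k distinct parts is. *)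
Fixpoint beta k := if k is k'.+1 then beta k' + k'./2 else 0.

Lemma beta_lb k : k * k <= 4 * beta k + 3 * k.
Proof.
elim: k => [|k IH] //=; have := odd_double_half k; rewrite -muln2.
have : (odd k : nat) <= 1 by case: (odd k).
by move: (odd k : nat) k./2 (beta k) IH; lia.
Qed.

Lemma beta_step k : 2 * (beta k.+2 - beta k.+1) <= k.+1 /\ beta k.+1 <= beta k.+2.
Proof.
rewrite /=; have := odd_double_half k.+1; rewrite -muln2.
by move: (odd k.+1 : nat) (k.+1)./2 (beta k + k./2); lia.
Qed.

Lemma card_distinct_le n k : #|distinct_compositions n k.+1| <= 'C(n - beta k.+1, k).
Proof.
elim/ltn_ind: n k => n IH [|k].
  apply: leq_trans (subset_leq_card (distinct_sub_compositions _ _)) _.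
  rewrite subn0 bin0.
  by case: n {IH} => [|n]; rewrite ?card_compositions0 ?card_compositions ?bin0.
have [small|big] := ltnP n k.+2.
  suff -> : #|distinct_compositions n k.+2| = 0 by [].
  apply: eq_card0 => x; apply/negbTE/distinct_compositionsP => -[xC _].
  by have := comp_length_le xC; lia.
apply: leq_trans (card_distinct_rec n k.+1) _.
have [h1 h2] := beta_step k; have lt_n : n - k.+2 < n by lia.
apply: leq_trans (leq_add (leq_mul (leqnn k.+2) (IH _ lt_n k)) (IH _ lt_n k.+1)) _.
have := @bin_rec_ineq n k (beta k.+1) (beta k.+2 - beta k.+1) h1 big.
by rewrite subnKC //; apply => k0; rewrite k0.
Qed.

Lemma bin_sub_pow a d r : 'C(a - d, r) * a ^ r <= (a - d) ^ r * 'C(a, r).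
Proof.
elim: r => [|r IH]; first by rewrite !expn0 !bin0.
rewrite -(leq_pmul2l (ltn0Sn r)).
have -> : r.+1 * ('C(a - d, r.+1) * a ^ r.+1)
    = ('C(a - d, r) * a ^ r) * ((a - d - r) * a).
  by rewrite mulnA mul_bin_left expnS; move: ('C(_, r)) (a ^ r) => c e; nia.
have -> : r.+1 * ((a - d) ^ r.+1 * 'C(a, r.+1))
    = ((a - d) ^ r * 'C(a, r)) * ((a - d) * (a - r)).
  by rewrite mulnCA mul_bin_left expnS; move: ('C(a, r)) ((a - d) ^ r) => c e; nia.
apply: leq_mul IH _; have [|lt_a] := leqP (d + r) a; last first.
  by have -> : a - d - r = 0 by lia.
move=> /subnKC <-; move: (a - (d + r)) => e.
have -> : d + r + e - d - r = e by lia.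
have -> : d + r + e - d = r + e by lia.
have -> : d + r + e - r = d + e by lia.
nia.
Qed.

Lemma pow_sub_bernoulli a d r : d <= a -> (a - d) ^ r * (a + r * d) <= a ^ r.+1.
Proof.
move=> da; elim: r => [|r IH]; first by rewrite expn0 mul0n addn0 mul1n expn1.
have h : (a - d) * (a + r.+1 * d) <= a * (a + r * d) by nia.
apply: (@leq_trans ((a - d) ^ r * (a * (a + r * d)))).
  by rewrite expnS [(a - d) * _]mulnC -mulnA leq_mul.
by rewrite mulnCA [a ^ r.+2]expnS leq_mul.
Qed.

Lemma bin_sub_ratio a d r : 'C(a - d, r) * (a + r * d) <= a * 'C(a, r).
Proof.
have [da|ad] := leqP d a; last first.
  case: r => [|r]; last by rewrite (_ : a - d = 0) ?bin0n ?mul0n //; lia.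
  by rewrite !bin0 mul0n addn0 mul1n muln1.
case: a da => [|a] da; first by rewrite (_ : d = 0) ?bin0n; case: r => //; lia.
rewrite -(leq_pmul2l (expn_gt0 a.+1 r)).
apply: (@leq_trans ((a.+1 - d) ^ r * 'C(a.+1, r) * (a.+1 + r * d))).
  by rewrite mulnA [_ * 'C(_, _)]mulnC leq_mul // bin_sub_pow.
apply: (@leq_trans ('C(a.+1, r) * a.+1 ^ r.+1)).
  by rewrite mulnAC mulnC leq_mul // pow_sub_bernoulli.
by rewrite expnS mulnC mulnA [a.+1 ^ r * _]mulnC.
Qed.

Lemma card_distinct_ratio n k :
  #|distinct_compositions n k.+1| * (k * (beta k.+1 - 1)) <= n * #|compositions n k.+1|.
Proof.
set b := beta k.+1; have [-> | b_gt0] := posnP b; first by rewrite sub0n !muln0.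
apply: (@leq_trans ('C((n - 1) - (b - 1), k) * ((n - 1) + k * (b - 1)))).
  have -> : (n - 1) - (b - 1) = n - b by lia.
  exact: leq_mul (card_distinct_le n k) (leq_addl _ _).
apply: leq_trans (bin_sub_ratio _ _ _) _.
case: n => [|n]; first by rewrite mul0n.
by rewrite subn1 card_compositions /= leq_mul2r leqnSn orbT.
Qed.

(* Since beta K is about K^2 / 4, for K >= 20 this yields
   #D(n, K) K^3 <= 16 n #C(n, K). *)
Lemma card_distinct_bound n K : 20 <= K ->
  #|distinct_compositions n K| * K ^ 3 <= 16 * n * #|compositions n K|.
Proof.
case: K => [|k] // K_ge20.
have cube : k.+1 ^ 3 <= 16 * (k * (beta k.+1 - 1)).
  have := beta_lb k.+1; rewrite !expnS expn0 muln1 subn1 /=.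
  by move: (beta k.+1) => b; nia.
apply: leq_trans (leq_mul (leqnn _) cube) _.
by rewrite mulnCA -mulnA leq_mul2l card_distinct_ratio orbT.
Qed.

(* Reals is imported only now, since it rebinds the nat notations ^ and %N
   used in the combinatorial part above. *)
From Stdlib Require Import Reals.

Section RealBounds.
Local Open Scope R_scope.

Lemma INR_le (a b : nat) : (a <= b)%nat -> INR a <= INR b.
Proof. by move/leP; apply: le_INR. Qed.

Lemma INR_cube K : INR (expn K 3) = INR K ^ 3.
Proof. by rewrite !expnS expn0 muln1 !mult_INR /=; ring. Qed.

(* P is a probability, also when there are no compositions at all. *)
Lemma prob_equal_parts_range n K : 0 <= prob_equal_parts n K <= 1.
Proof.
rewrite /prob_equal_parts; set w := #|_|; set c := #|_|.
have w_le_c : (w <= c)%nat.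
  by apply: subset_leq_card; apply/subsetP => x /setIdP [].
have [c0 | c_gt0] := posnP c.
  by move: w_le_c; rewrite c0 leqn0 => /eqP ->; rewrite /Rdiv Rmult_0_l; lra.
have c_pos : 0 < INR c by apply/lt_0_INR/ltP.
have := INR_le w_le_c; have := pos_INR w; move: (INR w) (INR c) c_pos => x y y_pos.
split; first by apply: Rle_mult_inv_pos.
by apply: (Rmult_le_reg_r y) => //; rewrite /Rdiv Rmult_assoc Rinv_l; lra.
Qed.

Lemma prob_equal_parts_upper n K : (1 < K)%nat -> (K <= n)%nat ->
  prob_equal_parts n K * INR (n - K.-1) <= INR K ^ 3.
Proof.
move=> K_gt1 K_le_n; have := INR_le (card_equal_parts_bound n K_gt1).
rewrite (mult_INR (expn K 3)) INR_cube !mult_INR /prob_equal_parts.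
set w := INR #|comps_with_equal_parts n K|; set c := INR #|compositions n K|.
have c_pos : 0 < c.
  by apply/lt_0_INR/ltP/card_compositions_gt0 => //; apply: ltnW.
move=> bound; apply: (Rmult_le_reg_r c) => //.
by have -> : w / c * INR (n - K.-1) * c = w * INR (n - K.-1) by field; lra.
Qed.

Lemma prob_equal_parts_lower n K : (20 <= K)%nat -> (K <= n)%nat ->
  (1 - prob_equal_parts n K) * INR K ^ 3 <= 16 * INR n.
Proof.
move=> K_ge20 K_le_n; have := INR_le (card_distinct_bound n K_ge20).
have := card_equal_parts_distinct n K; move/(congr1 INR); rewrite plus_INR.
rewrite (mult_INR _ (expn K 3)) INR_cube !mult_INR (_ : INR 16 = 16); last first.
  by rewrite /=; lra.
rewrite /prob_equal_parts; set w := INR #|comps_with_equal_parts n K|.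
set c := INR #|compositions n K|.
set d := INR #|distinct_compositions n K|; move=> sum bound.
have c_pos : 0 < c.
  by apply/lt_0_INR/ltP/card_compositions_gt0 => //; apply: leq_trans K_ge20.
apply: (Rmult_le_reg_r c) => //.
by have -> : (1 - w / c) * INR K ^ 3 * c = d * INR K ^ 3 by rewrite -sum; field; lra.
Qed.

(* If n / K^3 > 1 + 1/eps then P < eps, since n - K + 1 > K^3 / eps. *)
Lemma prob_equal_parts_small n K eps : (1 < K)%nat -> (K <= n)%nat -> 0 < eps ->
  1 + 1 / eps < INR n / INR K ^ 3 -> prob_equal_parts n K < eps.
Proof.
move=> K_gt1 K_le_n eps_gt0 ratio.
have K_ge1 : 1 <= INR K by apply: (INR_le (ltnW K_gt1)).
have t_pos : 0 < INR K ^ 3 by apply: pow_lt; lra.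
have n_big : INR K ^ 3 + INR K ^ 3 / eps < INR n.
  have := Rmult_lt_compat_r _ _ _ t_pos ratio.
  by rewrite /Rdiv Rmult_assoc Rinv_l; lra.
have D_big : INR K ^ 3 / eps < INR (n - K.-1).
  rewrite minus_INR; last by apply/leP; apply: leq_trans (leq_pred K) K_le_n.
  have := INR_le (leq_pred K); have : INR K <= INR K ^ 3 by rewrite /=; nra.
  lra.
have := prob_equal_parts_upper K_gt1 K_le_n; have := prob_equal_parts_range n K.
move: D_big; set D := INR (n - K.-1); set p := prob_equal_parts n K.
rewrite /Rdiv => D_big [p_ge0 _] pD.
have : INR K ^ 3 < eps * D.
  have := Rmult_lt_compat_l _ _ _ eps_gt0 D_big.
  by rewrite -Rmult_assoc (Rmult_comm eps) Rmult_assoc Rinv_r; lra.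
nra.
Qed.

(* If n / K^3 < min(eps/16, 1/400) then K >= 20 (as K <= n) and 1 - P < eps. *)
Lemma prob_equal_parts_near_one n K eps : (1 < K)%nat -> (K <= n)%nat -> 0 < eps ->
  INR n / INR K ^ 3 < Rmin (eps / 16) (1 / 400) -> 1 - prob_equal_parts n K < eps.
Proof.
move=> K_gt1 K_le_n eps_gt0 ratio.
have K_ge1 : 1 <= INR K by apply: (INR_le (ltnW K_gt1)).
have t_pos : 0 < INR K ^ 3 by apply: pow_lt; lra.
have n_lt a : INR n / INR K ^ 3 < a -> INR n < a * INR K ^ 3.
  move=> lt_a; have := Rmult_lt_compat_r _ _ _ t_pos lt_a.
  by rewrite /Rdiv Rmult_assoc Rinv_l; lra.
have n_ge_K := INR_le K_le_n.
have K_ge20 : (20 <= K)%nat.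
  rewrite leqNgt; apply/negP; rewrite ltnS => /INR_le K_le19.
  have {}K_le19 : INR K <= 19 by move: K_le19; rewrite /=; lra.
  have : INR K ^ 3 <= 361 * INR K.
    have : INR K * INR K <= 361 by nra.
    by rewrite /=; nra.
  have := n_lt _ (Rlt_le_trans _ _ _ ratio (Rmin_r _ _)); lra.
have := n_lt _ (Rlt_le_trans _ _ _ ratio (Rmin_l _ _)).
have := prob_equal_parts_lower K_ge20 K_le_n.
nra.
Qed.

End RealBounds.

Theorem mainTheorem3 (n k : nat -> nat)
  (hk : forall m, (2 <= k m)%N) (hnk : forall m, (k m <= n m)%N) :
  (cv_infty (fun m => (INR (n m) / INR (k m) ^ 3)%R) ->
     Un_cv (fun m => prob_equal_parts (n m) (k m)) 0%R) /\
  (Un_cv (fun m => (INR (n m) / INR (k m) ^ 3)%R) 0%R ->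
     Un_cv (fun m => prob_equal_parts (n m) (k m)) 1%R).
Proof.
split=> [to_infty | to_zero] eps eps_gt0.
- have [M HM] := to_infty (1 + 1 / eps)%R.
  exists M => m /HM ratio; have [p_ge0 _] := prob_equal_parts_range (n m) (k m).
  rewrite /R_dist Rminus_0_r Rabs_right; last exact: Rle_ge.
  exact: prob_equal_parts_small.
- have delta_gt0 : (0 < Rmin (eps / 16) (1 / 400))%R by apply: Rmin_pos; lra.
  have [M HM] := to_zero _ delta_gt0.
  exists M => m /HM; rewrite /R_dist Rminus_0_r => ratio.
  have [_ p_le1] := prob_equal_parts_range (n m) (k m).
  rewrite Rabs_minus_sym Rabs_right; last lra.
  exact: prob_equal_parts_near_one (Rle_lt_trans _ _ _ (Rle_abs _) ratio).
Qed.
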